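(* Let $f$ be a positive definite function and $W=\{w_1,\dots,w_N\}\subset V$. Then the GBF interpolation operator satisfies $$\sup_{x\in\mathcal{L}(G),\ \|x\|\le1}\|\mathrm{I}_Wx\|\le\|\mathbf{K}_{f,W}^{-1}\|\,\|\mathbf{K}_f\|\le\frac{\max_{1\le k\le n}\hat{f}_k}{\min_{1\le k\le n}\hat{f}_k}.$$
   Context: Let $G$ be a graph with vertex set $V=\{v_1,\dots,v_n\}$, symmetric non-negative weighted adjacency matrix $\mathbf{A}$, degree matrix $\mathbf{D}=\mathrm{diag}(\sum_k\mathbf{A}_{ik})$ (positive), and normalized Laplacian $\mathbf{L}=\mathbf{I}_n-\mathbf{D}^{-1/2}\mathbf{A}\mathbf{D}^{-1/2}$. Signals are vectors in $\mathcal{L}(G)\cong\mathbb{R}^n$ with euclidean norm $\|\cdot\|$ and standard basis $e_1,\dots,e_n$; matrix norms are spectral norms. Fix an orthonormal eigendecomposition $\mathbf{L}=\mathbf{U}\,\mathrm{diag}(\lambda_1,\dots,\lambda_n)\mathbf{U}^\intercal$ with columns $u_1,\dots,u_n$. Fourier transform $\hat{x}=\mathbf{U}^\intercal x$; convolution operator $\mathbf{C}_x=\mathbf{U}\,\mathrm{diag}(\hat{x})\mathbf{U}^\intercal$. For $f\in\mathcal{L}(G)$ let $(\mathbf{K}_f)_{ij}=(\mathbf{C}_{e_j}f)(v_i)$; $f$ is a positive definite function if $\mathbf{K}_f$ is symmetric strictly positive definite. For distinct nodes $w_k=v_{j_k}$, $k=1,\dots,N$, let $\mathbf{K}_{f,W}\in\mathbb{R}^{N\times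 N}$, $(\mathbf{K}_{f,W})_{kl}=(\mathbf{C}_{e_{j_l}}f)(w_k)$; the GBF interpolant is $\mathrm{I}_Wx=\sum_{k=1}^Nc_k\mathbf{C}_{e_{j_k}}f$ where $\mathbf{K}_{f,W}c=(x(w_1),\dots,x(w_N))^\intercal$. *)

From HB Require Import structures.
From mathcomp Require Import all_boot all_order all_algebra.
From mathcomp Require Import classical_sets boolp reals.
Set Implicit Arguments. Unset Strict Implicit. Unset Printing Implicit Defensive.
Import Order.TTheory GRing.Theory Num.Theory.
Local Open Scope ring_scope.
Local Open Scope classical_set_scope.

Section GBF.
Variable R : realType.

Definition enorm n (x : 'cV[R]_n) : R := Num.sqrt (\sum_i x i 0 ^+ 2).

Definition specnorm m n (M : 'M[R]_(m, n)) : R :=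
  sup [set enorm (M *m x) | x in [set x : 'cV[R]_n | enorm x <= 1]].

Definition evec n (j : 'I_n) : 'cV[R]_n := delta_mx j 0.

Definition degmx n (A : 'M[R]_n) : 'M[R]_n := diag_mx (\row_i \sum_k A i k).
Definition deg_invsqrt n (A : 'M[R]_n) : 'M[R]_n :=
  diag_mx (\row_i (Num.sqrt (\sum_k A i k))^-1).
Definition normLap n (A : 'M[R]_n) : 'M[R]_n :=
  1%:M - deg_invsqrt A *m A *m deg_invsqrt A.

Definition gft n (U : 'M[R]_n) (x : 'cV[R]_n) : 'cV[R]_n := U^T *m x.
Definition convop n (U : 'M[R]_n) (x : 'cV[R]_n) : 'M[R]_n :=
  U *m diag_mx (gft U x)^T *m U^T.

Definition Kmat n (U : 'M[R]_n) (f : 'cV[R]_n) : 'M[R]_n :=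
  \matrix_(i, j) (convop U (evec j) *m f) i 0.

Definition pos_def_fun n (U : 'M[R]_n) (f : 'cV[R]_n) : Prop :=
  (Kmat U f)^T = Kmat U f /\
  forall x : 'cV[R]_n, x != 0 -> 0 < (x^T *m Kmat U f *m x) 0 0.

(* (K_{f,W})_{kl} = (C_{e_{j_l}} f)(w_k), nodes w_k = v_{w k} *)
Definition KmatW n N (U : 'M[R]_n) (f : 'cV[R]_n) (w : 'I_N -> 'I_n) : 'M[R]_N :=
  \matrix_(k, l) (convop U (evec (w l)) *m f) (w k) 0.

Definition gbf_interp n N (U : 'M[R]_n) (f : 'cV[R]_n) (w : 'I_N -> 'I_n)
    (x : 'cV[R]_n) : 'cV[R]_n :=
  let c := invmx (KmatW U f w) *m (\col_k x (w k) 0) in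
  \sum_k c k 0 *: (convop U (evec (w k)) *m f).

End GBF.

From HB Require Import structures.
From mathcomp Require Import all_boot all_order all_algebra.
From mathcomp Require Import classical_sets boolp reals.
From mathcomp Require Import ring lra.
Set Implicit Arguments. Unset Strict Implicit. Unset Printing Implicit Defensive.
Import Order.TTheory GRing.Theory Num.Theory.
Local Open Scope ring_scope.
Local Open Scope classical_set_scope.

(* In the Fourier basis [K_f = U diag(f^) U^T], so the eigenvalues of [K_f]
   are the [f^_k]; they are positive since [K_f] is positive definite, which
   gives [||K_f|| <= max f^].  [K_{f,W} = E^T K_f E] for the isometric node
   selection [E], so [K_{f,W}] is coercive with constant [min f^], whence
   [||K_{f,W}^-1|| <= 1 / min f^].  Finally [I_W = K_f E K_{f,W}^-1 E^T]
   with [||E|| = 1] and [||E^T|| <= 1]. *)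

Section RealMatrices.
Variable R : realType.

Definition sqnorm n (x : 'cV[R]_n) : R := \sum_i x i 0 ^+ 2.
Definition dotmx n (x y : 'cV[R]_n) : R := (x^T *m y) 0 0.

Lemma dotmxE n (x y : 'cV[R]_n) : dotmx x y = \sum_i x i 0 * y i 0.
Proof. by rewrite /dotmx mxE; apply: eq_bigr => i _; rewrite mxE. Qed.

Lemma sqnorm_dotmx n (x : 'cV[R]_n) : sqnorm x = dotmx x x.
Proof. by rewrite dotmxE; apply: eq_bigr => i _; rewrite expr2. Qed.

Lemma sqnorm_ge0 n (x : 'cV[R]_n) : 0 <= sqnorm x.
Proof. by apply: sumr_ge0 => i _; rewrite sqr_ge0. Qed.

Lemma sqnorm_eq0 n (x : 'cV[R]_n) : sqnorm x = 0 -> x = 0.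
Proof.
move=> x0; apply/matrixP => i j; rewrite (ord1 j) mxE.
have /eqP : x i 0 ^+ 2 = 0.
  by apply: (psumr_eq0P (P := xpredT) _ x0) => // k _; rewrite sqr_ge0.
by rewrite sqrf_eq0 => /eqP.
Qed.

Lemma sqnorm_isometry p q (E : 'M[R]_(p, q)) (x : 'cV[R]_q) :
  E^T *m E = 1%:M -> sqnorm (E *m x) = sqnorm x.
Proof.
by move=> E_iso; rewrite !sqnorm_dotmx /dotmx trmx_mul -mulmxA (mulmxA E^T) E_iso mul1mx.
Qed.

Lemma sqnorm0 n : sqnorm (0 : 'cV[R]_n) = 0.
Proof. by rewrite /sqnorm big1 // => i _; rewrite mxE expr0n. Qed.

Lemma enormE n (x : 'cV[R]_n) : enorm x = Num.sqrt (sqnorm x).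
Proof. by []. Qed.

Lemma enorm0 n : enorm (0 : 'cV[R]_n) = 0.
Proof. by rewrite enormE sqnorm0 sqrtr0. Qed.

Lemma enorm_gt0 n (x : 'cV[R]_n) : x != 0 -> 0 < enorm x.
Proof.
move=> x_neq0; rewrite sqrtr_gt0 lt_def sqnorm_ge0 andbT.
by apply: contraNneq x_neq0 => /sqnorm_eq0 ->.
Qed.

Lemma enormZ n a (x : 'cV[R]_n) : enorm (a *: x) = `|a| * enorm x.
Proof.
rewrite !enormE -sqrtr_sqr -sqrtrM ?sqr_ge0 // /sqnorm mulr_sumr.
by congr Num.sqrt; apply: eq_bigr => i _; rewrite mxE exprMn.
Qed.

Lemma ler_enorm p q (x : 'cV[R]_p) (y : 'cV[R]_q) c : 0 <= c ->
  sqnorm x <= c ^+ 2 * sqnorm y -> enorm x <= c * enorm y.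
Proof.
move=> c_ge0 le_xy; rewrite !enormE -(ger0_norm c_ge0) -sqrtr_sqr.
by rewrite -sqrtrM ?sqr_ge0 // ler_sqrt // mulr_ge0 ?sqr_ge0 ?sqnorm_ge0.
Qed.

Lemma sup_unit_ball_le p q (F : 'cV[R]_q -> 'cV[R]_p) c : 0 <= c ->
  (forall x, enorm (F x) <= c * enorm x) ->
  sup [set enorm (F x) | x in [set x : 'cV[R]_q | enorm x <= 1]] <= c.
Proof.
move=> c_ge0 Fc; apply: ge_sup; first by exists (enorm (F 0)), 0; rewrite //= enorm0.
move=> _ [x /= x_le1 <-]; apply: le_trans (Fc x) _.
by rewrite -[leRHS]mulr1 ler_wpM2l.
Qed.

Section SpectralNorm.
Variables (p q : nat) (M : 'M[R]_(p, q)) (c : R).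
Hypothesis M_bounded : forall x, enorm (M *m x) <= c * enorm x.

Lemma specnorm_has_ubound :
  has_ubound [set enorm (M *m x) | x in [set x : 'cV[R]_q | enorm x <= 1]].
Proof.
exists `|c| => _ [x /= x_le1 <-]; apply: le_trans (M_bounded x) _.
apply: le_trans (ler_norm _) _; rewrite normrM (ger0_norm (sqrtr_ge0 _)).
by rewrite -[leRHS]mulr1 ler_wpM2l.
Qed.

Lemma specnorm_ge0 : 0 <= specnorm M.
Proof.
have := ub_le_sup specnorm_has_ubound; apply.
by exists 0; rewrite /= ?enorm0 // mulmx0 enorm0.
Qed.

Lemma enorm_mul_le_specnorm x : enorm (M *m x) <= specnorm M * enorm x.
Proof.
have [->|x_neq0] := eqVneq x 0; first by rewrite mulmx0 !enorm0 mulr0.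
have x_gt0 := enorm_gt0 x_neq0.
have inv_ge0 : 0 <= (enorm x)^-1 by rewrite invr_ge0 ltW.
have : enorm (M *m ((enorm x)^-1 *: x)) <= specnorm M.
  have := ub_le_sup specnorm_has_ubound; apply.
  exists ((enorm x)^-1 *: x) => //=.
  by rewrite enormZ ger0_norm // mulVf ?gt_eqF.
rewrite -scalemxAr enormZ ger0_norm //.
by rewrite -ler_pdivlMl ?invr_gt0 // invrK mulrC.
Qed.

End SpectralNorm.

Lemma specnorm_le p q (M : 'M[R]_(p, q)) c : 0 <= c ->
  (forall x, enorm (M *m x) <= c * enorm x) -> specnorm M <= c.
Proof. exact: sup_unit_ball_le. Qed.

Lemma mul_evec p q (M : 'M[R]_(p, q)) j i : (M *m evec R j) i 0 = M i j.
Proof.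
rewrite mxE (bigD1 j) //= big1 ?addr0 => [|l /negbTE l_neqj].
  by rewrite !mxE !eqxx mulr1.
by rewrite !mxE l_neqj mulr0.
Qed.

Section OrthogonalDiagonalization.
Variables (n : nat) (U : 'M[R]_n) (d : 'rV[R]_n).
Hypothesis U_orth : U^T *m U = 1%:M.

Lemma sqnorm_trmx_orth y : sqnorm (U^T *m y) = sqnorm y.
Proof. by apply: sqnorm_isometry; rewrite trmxK mulmx1C. Qed.

Lemma dotmx_orth_diag y :
  dotmx y (U *m diag_mx d *m U^T *m y) = \sum_i d 0 i * (U^T *m y) i 0 ^+ 2.
Proof.
have -> : dotmx y (U *m diag_mx d *m U^T *m y)
          = dotmx (U^T *m y) (diag_mx d *m (U^T *m y)).
  by rewrite /dotmx trmx_mul trmxK !mulmxA.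
set z := U^T *m y.
by rewrite dotmxE mul_diag_mx; apply: eq_bigr => i _; rewrite !mxE mulrCA expr2.
Qed.

Lemma orth_diag_gt0 :
  (forall x, x != 0 -> 0 < dotmx x (U *m diag_mx d *m U^T *m x)) ->
  forall i, 0 < d 0 i.
Proof.
move=> posdef i; have UtUe : U^T *m (U *m evec R i) = evec R i.
  by rewrite mulmxA U_orth mul1mx.
have Ue_neq0 : U *m evec R i != 0.
  apply/eqP => Ue0; move: UtUe; rewrite Ue0 mulmx0 => /matrixP/(_ i 0).
  by rewrite !mxE !eqxx /= => /eqP; rewrite eq_sym oner_eq0.
have := posdef _ Ue_neq0; rewrite dotmx_orth_diag UtUe (bigD1 i) //= big1 ?addr0.
  by rewrite mxE !eqxx /= expr1n mulr1.
by move=> j /negbTE j_neqi; rewrite mxE j_neqi /= expr0n mulr0.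
Qed.

Lemma enorm_orth_diag_le M : 0 <= M -> (forall i, `|d 0 i| <= M) ->
  forall x, enorm (U *m diag_mx d *m U^T *m x) <= M * enorm x.
Proof.
move=> M_ge0 d_le x; apply: ler_enorm => //.
rewrite -!mulmxA sqnorm_isometry // -(sqnorm_trmx_orth x) /sqnorm mulr_sumr.
apply: ler_sum => i _; rewrite mul_diag_mx mxE exprMn ler_wpM2r ?sqr_ge0 //.
by rewrite -[d 0 i ^+ 2]real_normK ?num_real // lerXn2r ?nnegrE.
Qed.

Definition coercive m (B : 'M[R]_m) (a : R) :=
  forall c, a * sqnorm c <= dotmx c (B *m c).

Lemma orth_diag_coercive a : (forall i, a <= d 0 i) ->
  coercive (U *m diag_mx d *m U^T) a.
Proof.
move=> a_le y; rewrite dotmx_orth_diag -(sqnorm_trmx_orth y) /sqnorm mulr_sumr.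
by apply: ler_sum => i _; rewrite ler_wpM2r ?sqr_ge0.
Qed.

End OrthogonalDiagonalization.

Section Coercive.
Variables (n : nat) (B : 'M[R]_n) (a : R).
Hypotheses (a_gt0 : 0 < a) (B_coercive : coercive B a).

Lemma coercive_sqnorm_mul c : a ^+ 2 * sqnorm c <= sqnorm (B *m c).
Proof.
set Bc := B *m c.
have expand : sqnorm (Bc - a *: c)
              = sqnorm Bc - 2 * a * dotmx c Bc + a ^+ 2 * sqnorm c.
  rewrite dotmxE /sqnorm !mulr_sumr -sumrB -big_split.
  by apply: eq_bigr => i _; rewrite !mxE /=; ring.
have gap : 0 <= a * (dotmx c Bc - a * sqnorm c).
  by rewrite mulr_ge0 ?(ltW a_gt0) ?subr_ge0 ?B_coercive.
have := sqnorm_ge0 (Bc - a *: c); rewrite expand; nra.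
Qed.

Lemma coercive_unitmx : B \in unitmx.
Proof.
rewrite -unitmx_tr unitmxE unitfE; apply/negP => /det0P [v v_neq0 vBt0].
have Bv0 : B *m v^T = 0 by rewrite -[B]trmxK -trmx_mul vBt0 trmx0.
have /sqnorm_eq0 vt0 : sqnorm v^T = 0.
  apply/eqP; rewrite eq_le sqnorm_ge0 andbT -(ler_pM2l (exprn_gt0 2 a_gt0)) mulr0.
  by have := coercive_sqnorm_mul v^T; rewrite Bv0 sqnorm0.
by move: v_neq0; rewrite -[v]trmxK vt0 trmx0 eqxx.
Qed.

Lemma coercive_invmx_le y : enorm (invmx B *m y) <= a^-1 * enorm y.
Proof.
apply: ler_enorm; first by rewrite invr_ge0 ltW.
have := coercive_sqnorm_mul (invmx B *m y); rewrite mulKVmx ?coercive_unitmx //.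
by rewrite exprVn ler_pdivlMl ?exprn_gt0.
Qed.

End Coercive.

Lemma coercive_isometry_conj p q (B : 'M[R]_p) (E : 'M[R]_(p, q)) a :
  E^T *m E = 1%:M -> coercive B a -> coercive (E^T *m B *m E) a.
Proof.
move=> E_iso B_coercive c; rewrite -(sqnorm_isometry c E_iso).
have -> : dotmx c (E^T *m B *m E *m c) = dotmx (E *m c) (B *m (E *m c)).
  by rewrite /dotmx trmx_mul !mulmxA.
exact: B_coercive.
Qed.

Section Selection.
Variables (n N : nat) (w : 'I_N -> 'I_n).

Definition selmx : 'M[R]_(n, N) := \matrix_(i, k) (i == w k)%:R.

Lemma tr_selmx_mul p (M : 'M[R]_(n, p)) k j : (selmx^T *m M) k j = M (w k) j.
Proof.
rewrite mxE (bigD1 (w k)) //= big1 ?addr0 => [|i /negbTE i_neq].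
  by rewrite !mxE eqxx mul1r.
by rewrite !mxE i_neq mul0r.
Qed.

Lemma mul_selmx p (M : 'M[R]_(p, n)) i l : (M *m selmx) i l = M i (w l).
Proof.
rewrite mxE (bigD1 (w l)) //= big1 ?addr0 => [|j /negbTE j_neq].
  by rewrite mxE eqxx mulr1.
by rewrite mxE j_neq mulr0.
Qed.

Lemma selmx_mul_col (c : 'cV[R]_N) : selmx *m c = \sum_k c k 0 *: evec R (w k).
Proof.
apply/matrixP => i z; rewrite (ord1 z) summxE mxE; apply: eq_bigr => k _.
by rewrite !mxE eqxx andbT mulrC.
Qed.

Hypothesis w_inj : injective w.

Lemma selmx_isometry : selmx^T *m selmx = 1%:M.
Proof. by apply/matrixP => k l; rewrite tr_selmx_mul !mxE (inj_eq w_inj). Qed.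

Lemma enorm_tr_selmx_le x : enorm (selmx^T *m x) <= enorm x.
Proof.
rewrite !enormE ler_sqrt ?sqnorm_ge0 //.
have -> : sqnorm (selmx^T *m x) = \sum_(i in [set w k | k in [set: 'I_N]]%SET) x i 0 ^+ 2.
  rewrite big_imset /=; last by move=> k l _ _; apply: w_inj.
  by apply: eq_big => [k|k _]; rewrite ?inE ?tr_selmx_mul.
rewrite /sqnorm [leRHS](bigID (mem [set w k | k in [set: 'I_N]]%SET)) /= lerDl.
by apply: sumr_ge0 => i _; rewrite sqr_ge0.
Qed.

End Selection.

End RealMatrices.

Section Kernels.
Variables (R : realType) (n : nat) (U : 'M[R]_n) (f : 'cV[R]_n).

Lemma diag_mx_tr_comm (a b : 'cV[R]_n) : diag_mx a^T *m b = diag_mx b^T *m a.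
Proof. by rewrite !mul_diag_mx; apply/matrixP => i j; rewrite !mxE (ord1 j) mulrC. Qed.

Lemma Kmat_diag : Kmat U f = U *m diag_mx (gft U f)^T *m U^T.
Proof.
apply/matrixP => i j; rewrite mxE /convop -!mulmxA /gft diag_mx_tr_comm.
by rewrite !mulmxA mul_evec.
Qed.

Lemma convop_evec_mul j : convop U (evec R j) *m f = Kmat U f *m evec R j.
Proof. by apply/matrixP => i z; rewrite (ord1 z) mul_evec [Kmat _ _ _ _]mxE. Qed.

Lemma pos_def_fun_gft_gt0 : U^T *m U = 1%:M -> pos_def_fun U f ->
  forall k, 0 < gft U f k 0.
Proof.
move=> U_orth [_ f_posdef] k.
have := orth_diag_gt0 U_orth (d := (gft U f)^T) _ k; rewrite mxE; apply.
by move=> x /f_posdef; rewrite Kmat_diag /dotmx !mulmxA.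
Qed.

Variables (N : nat) (w : 'I_N -> 'I_n).

Lemma KmatW_selmx : KmatW U f w = (selmx R w)^T *m Kmat U f *m selmx R w.
Proof. by apply/matrixP => k l; rewrite [LHS]mxE mul_selmx tr_selmx_mul [Kmat _ _ _ _]mxE. Qed.

Lemma gbf_interpE x : gbf_interp U f w x =
  Kmat U f *m (selmx R w *m (invmx (KmatW U f w) *m ((selmx R w)^T *m x))).
Proof.
rewrite /gbf_interp.
have -> : \col_k x (w k) 0 = (selmx R w)^T *m x.
  by apply/matrixP => k z; rewrite (ord1 z) tr_selmx_mul mxE.
rewrite selmx_mul_col mulmx_sumr; apply: eq_bigr => k _.
by rewrite -scalemxAr convop_evec_mul.
Qed.

Lemma enorm_gbf_interp_le cK cW x : injective w ->
  (forall y, enorm (Kmat U f *m y) <= cK * enorm y) ->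
  (forall y, enorm (invmx (KmatW U f w) *m y) <= cW * enorm y) ->
  enorm (gbf_interp U f w x)
    <= specnorm (invmx (KmatW U f w)) * specnorm (Kmat U f) * enorm x.
Proof.
move=> w_inj K_le KWinv_le; rewrite gbf_interpE.
apply: le_trans (enorm_mul_le_specnorm K_le _) _.
rewrite [_ * specnorm (Kmat U f)]mulrC -mulrA ler_wpM2l ?(specnorm_ge0 K_le) //.
rewrite enormE sqnorm_isometry ?selmx_isometry // -enormE.
apply: le_trans (enorm_mul_le_specnorm KWinv_le _) _.
by rewrite ler_wpM2l ?(specnorm_ge0 KWinv_le) ?enorm_tr_selmx_le.
Qed.

End Kernels.

Section FiniteRange.
Variables (R : realType) (I : finType) (g : I -> R).

Lemma fin_range_has_ubound : has_ubound (range g).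
Proof.
exists (\sum_j `|g j|) => _ [i _ <-]; apply: le_trans (ler_norm _) _.
by rewrite (bigD1 i) //= lerDl sumr_ge0.
Qed.

Lemma fin_range_has_lbound : has_lbound (range g).
Proof.
exists (- \sum_j `|g j|) => _ [i _ <-]; rewrite lerNl.
by apply: le_trans (ler_norm (- g i)) _; rewrite normrN (bigD1 i) //= lerDl sumr_ge0.
Qed.

Lemma le_sup_fin_range i : g i <= sup (range g).
Proof. by have := ub_le_sup fin_range_has_ubound; apply; exists i. Qed.

Lemma inf_fin_range_le i : inf (range g) <= g i.
Proof. by have := ge_inf fin_range_has_lbound; apply; exists i. Qed.

Lemma inf_fin_range_gt0 (i0 : I) : (forall i, 0 < g i) -> 0 < inf (range g).
Proof.
move=> g_gt0; have [imin _ min_le] := @arg_minP _ _ _ i0 xpredT g isT.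
apply: lt_le_trans (g_gt0 imin) _; apply: lb_le_inf; first by exists (g i0), i0.
by move=> _ [i _ <-]; exact: min_le.
Qed.

End FiniteRange.

Theorem theorem8 (R : realType) (n N : nat) (A : 'M[R]_n)
  (U : 'M[R]_n) (lam : 'rV[R]_n) (f : 'cV[R]_n) (w : 'I_N -> 'I_n) :
  (0 < n)%N ->
  A^T = A -> (forall i j, 0 <= A i j) -> (forall i, 0 < \sum_k A i k) ->
  U^T *m U = 1%:M -> normLap A = U *m diag_mx lam *m U^T ->
  pos_def_fun U f ->
  injective w ->
  sup [set enorm (gbf_interp U f w x) | x in [set x : 'cV[R]_n | enorm x <= 1]]
    <= specnorm (invmx (KmatW U f w)) * specnorm (Kmat U f)
  /\ specnorm (invmx (KmatW U f w)) * specnorm (Kmat U f)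
    <= sup (range (fun k : 'I_n => gft U f k 0))
       / inf (range (fun k : 'I_n => gft U f k 0)).
Proof.
move=> n_gt0 _ _ _ U_orth _ f_posdef w_inj.
set fmax := sup (range (fun k : 'I_n => gft U f k 0)).
set fmin := inf (range (fun k : 'I_n => gft U f k 0)).
have fhat_gt0 := pos_def_fun_gft_gt0 U_orth f_posdef.
have fhat_le k : gft U f k 0 <= fmax := le_sup_fin_range _ k.
have fmin_gt0 : 0 < fmin := inf_fin_range_gt0 (Ordinal n_gt0) fhat_gt0.
have fmax_ge0 : 0 <= fmax := le_trans (ltW (fhat_gt0 _)) (fhat_le (Ordinal n_gt0)).
have K_le x : enorm (Kmat U f *m x) <= fmax * enorm x.
  rewrite Kmat_diag; apply: enorm_orth_diag_le => // i.
  by rewrite mxE ger0_norm ?fhat_le ?(ltW (fhat_gt0 i)).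
have KW_coercive : coercive (KmatW U f w) fmin.
  rewrite KmatW_selmx; apply: coercive_isometry_conj (selmx_isometry R w_inj) _.
  rewrite Kmat_diag; apply: (orth_diag_coercive U_orth) => i.
  by rewrite mxE; apply: inf_fin_range_le.
have KWinv_le := coercive_invmx_le fmin_gt0 KW_coercive.
have K_ge0 := specnorm_ge0 K_le; have KWinv_ge0 := specnorm_ge0 KWinv_le.
split.
  apply: sup_unit_ball_le => [|x]; first exact: mulr_ge0.
  exact: enorm_gbf_interp_le w_inj K_le KWinv_le.
have finv_ge0 : 0 <= fmin^-1 by rewrite invr_ge0 ltW.
rewrite [leRHS]mulrC; apply: ler_pM KWinv_ge0 K_ge0 _ _.
  exact: specnorm_le finv_ge0 KWinv_le.
exact: specnorm_le fmax_ge0 K_le.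
Qed.
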